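(* Let $\Bbbk$ be a field of characteristic $\neq 2$ and let $A_1,\dots,A_m\in\Bbbk^{n\times n}$ be symmetric matrices. Then there do not exist $P\in\mathrm{GL}_n(\Bbbk)$, an integer $t\ge 2$ and positive integers $n_1,\dots,n_t$ with $\sum_j n_j=n$ such that every $P^TA_iP$ ($1\le i\le m$) is block diagonal with diagonal blocks of sizes $n_1,\dots,n_t$, if and only if the only matrices $X\in Z(A_1,\dots,A_m)$ with $X^2=X$ are $X=0$ and $X=I_n$.
   Context: The center of symmetric matrices $A_1,\dots,A_m\in\Bbbk^{n\times n}$ is $Z(A_1,\dots,A_m)=\{X\in\Bbbk^{n\times n} : (A_iX)^T=A_iX \text{ for all } 1\le i\le m\}$. *)

From HB Require Import structures.
From mathcomp Require Import all_boot all_order all_algebra.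
Set Implicit Arguments. Unset Strict Implicit. Unset Printing Implicit Defensive.
Import GRing.Theory.
Local Open Scope ring_scope.

(* Index (0-based) of the block containing row/column k, for the block
   partition of {0,...,n-1} into consecutive intervals of sizes s = [n_1;...;n_t]:
   the first j such that k < n_1 + ... + n_(j+1). *)
Definition block_of (s : seq nat) (k : nat) : nat :=
  find (fun j => (k < sumn (take j.+1 s))%N) (iota 0 (size s)).

Definition block_diag_sizes (F : fieldType) (n : nat) (s : seq nat)
  (M : 'M[F]_n) : Prop :=
  forall i j : 'I_n, block_of s i <> block_of s j -> M i j = 0.

Definition in_center (F : fieldType) (n m : nat) (A : 'I_m -> 'M[F]_n)
  (X : 'M[F]_n) : Prop :=
  forall i : 'I_m, (A i *m X)^T = A i *m X.

From HB Require Import structures.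
From mathcomp Require Import all_boot all_order all_algebra.
Import GRing.Theory.
Local Open Scope ring_scope.

(* A congruence P^T A_i P that is simultaneously block diagonal yields the
   idempotent P D P^-1 in the center, D being the projection onto the first
   block, because D commutes with the symmetric matrices P^T A_i P.
   Conversely, for a nontrivial idempotent X of the center, the row spaces of
   X^T and 1 - X^T are complementary, and a basis of each gives the two
   diagonal blocks: X^T A_i (1 - X) = A_i X (1 - X) = 0. *)

Section CenterIdempotents.

Context {F : fieldType}.

Definition congruence_decomposable {n m} (A : 'I_m -> 'M[F]_n) : Prop :=
  exists (P : 'M[F]_n) (s : seq nat),
    [/\ P \in unitmx, (2 <= size s)%N, all (fun k => 0 < k)%N s,
        sumn s = n &
        forall i : 'I_m, block_diag_sizes s (P^T *m A i *m P)].

Lemma trmx_congruence n p (Q : 'M[F]_(n, p)) (S : 'M[F]_n) :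
  (Q^T *m S *m Q)^T = Q^T *m S^T *m Q.
Proof. by rewrite !trmx_mul trmxK mulmxA. Qed.

Lemma in_center_trmxE {n m} (A : 'I_m -> 'M[F]_n) X i :
  (A i)^T = A i -> in_center A X -> X^T *m A i = A i *m X.
Proof. by move=> Asym XC; rewrite -{1}Asym -trmx_mul XC. Qed.

Definition first_block_proj n k : 'M[F]_n :=
  diag_mx (\row_(j < n) ((j < k)%N)%:R).

Lemma first_block_proj_idem n k :
  first_block_proj n k *m first_block_proj n k = first_block_proj n k.
Proof.
rewrite mulmx_diag; congr diag_mx; apply/matrixP => i j; rewrite !mxE.
by case: (j < k)%N; rewrite ?mulr1 ?mulr0.
Qed.

Lemma first_block_proj_neq0 {n k} :
  (0 < k)%N -> (0 < n)%N -> first_block_proj n k != 0.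
Proof.
move=> k_gt0 n_gt0; apply/eqP => /matrixP/(_ (Ordinal n_gt0) (Ordinal n_gt0)).
by rewrite !mxE /= k_gt0 mulr1n; apply/eqP/oner_neq0.
Qed.

Lemma first_block_proj_neq1 {n k} : (k < n)%N -> first_block_proj n k != 1%:M.
Proof.
move=> lt_kn; apply/eqP => /matrixP/(_ (Ordinal lt_kn) (Ordinal lt_kn)).
by rewrite !mxE /= ltnn eqxx mulr1n; apply/eqP; rewrite eq_sym oner_neq0.
Qed.

Lemma block_of_eq0 {s : seq nat} k :
  (0 < size s)%N -> (block_of s k == 0)%N = (k < head 0%N s)%N.
Proof.
by case: s => //= a s _; rewrite /block_of /= take0 addn0; case: ifP.
Qed.

Lemma block_diag_first_block_projC {n} {s : seq nat} {M : 'M[F]_n} :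
  (0 < size s)%N -> block_diag_sizes s M ->
  M *m first_block_proj n (head 0%N s) = first_block_proj n (head 0%N s) *m M.
Proof.
move=> s_gt0 Mblk; apply/matrixP => a b.
rewrite mul_mx_diag mul_diag_mx !mxE.
have [lt_a lt_b] := (block_of_eq0 a s_gt0, block_of_eq0 b s_gt0).
case: (a < _)%N in lt_a *; case: (b < _)%N in lt_b *;
  rewrite ?mulr1 ?mul1r ?mulr0 ?mul0r // Mblk // => eq_ab;
  by rewrite eq_ab lt_b in lt_a.
Qed.

Lemma decomposable_center_idempotent {n m} {A : 'I_m -> 'M[F]_n} :
  (forall i, (A i)^T = A i) -> congruence_decomposable A ->
  exists X, [/\ in_center A X, X *m X = X, X <> 0 & X <> 1%:M].
Proof.
move=> Asym [P [s [Pu le2s s_pos sum_s Ablk]]].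
case: s le2s s_pos sum_s Ablk
  => [|n1 s] //= le2s /andP[n1_gt0 s_pos] sum_s Ablk.
have lt_n1n : (n1 < n)%N.
  rewrite -sum_s -[ltnLHS]addn0 ltn_add2l.
  case: s le2s s_pos {sum_s Ablk} => //= b s _ /andP[b_gt0 _].
  exact: ltn_addr.
pose D := first_block_proj n n1.
pose X := P *m D *m invmx P.
have XD : invmx P *m X *m P = D.
  by rewrite /X !mulmxA mulVmx // mul1mx -mulmxA mulVmx // mulmx1.
exists X; split.
- move=> i; pose B := P^T *m A i *m P.
  have BD_sym : (B *m D)^T = B *m D.
    have D_sym : D^T = D by rewrite /D /first_block_proj tr_diag_mx.
    rewrite trmx_mul D_sym /B trmx_congruence Asym.
    by rewrite (block_diag_first_block_projC _ (Ablk i)).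
  have -> : A i *m X = (invmx P)^T *m (B *m D) *m invmx P.
    by rewrite /B /X !mulmxA -trmx_mul mulmxV // trmx1 mul1mx.
  by rewrite trmx_congruence BD_sym.
- by rewrite /X -!mulmxA (mulmxA (invmx P)) mulVmx // mul1mx (mulmxA D)
    first_block_proj_idem.
- move=> X0.
  have := first_block_proj_neq0 n1_gt0 (ltn_trans n1_gt0 lt_n1n).
  by rewrite -/D -XD X0 mulmx0 mul0mx eqxx.
- move=> X1; have := first_block_proj_neq1 lt_n1n.
  by rewrite -/D -XD X1 mulmx1 mulVmx ?eqxx.
Qed.

Lemma idempotent_compl {n} {Y : 'M[F]_n} :
  Y *m Y = Y -> (1%:M - Y) *m (1%:M - Y) = 1%:M - Y.
Proof.
by move=> YY; rewrite mulmxBl !mulmxBr !mul1mx mulmx1 YY subrr subr0.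
Qed.

Lemma submx_idempotent_mulmx {k n} (u : 'M[F]_(k, n)) (Y : 'M[F]_n) :
  Y *m Y = Y -> (u <= Y)%MS -> u *m Y = u.
Proof. by move=> YY /submxP[D ->]; rewrite -mulmxA YY. Qed.

Lemma idempotent_kermx {n} {Y : 'M[F]_n} :
  Y *m Y = Y -> (kermx Y :=: 1%:M - Y)%MS.
Proof.
move=> YY; apply/eqmxP/andP; split.
  have -> : kermx Y = kermx Y *m (1%:M - Y).
    by rewrite mulmxBr mulmx1 mulmx_ker subr0.
  exact: submxMl.
by apply/sub_kermxP; rewrite mulmxBl mul1mx YY subrr.
Qed.

Lemma mxrank_idempotent_compl {n} {Y : 'M[F]_n} :
  Y *m Y = Y -> (\rank Y + \rank (1%:M - Y)%R)%N = n.
Proof.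
by move=> YY; rewrite -(idempotent_kermx YY) mxrank_ker subnKC ?rank_leq_row.
Qed.

Lemma row_full_row_base_compl {n} (Y : 'M[F]_n) :
  row_full (col_mx (row_base Y) (row_base (1%:M - Y))).
Proof.
rewrite -sub1mx -addsmxE -[1%:M in X in (X <= _)%MS](subrK Y) addrC.
by apply: addmx_sub_adds; rewrite eq_row_base.
Qed.

Lemma block_of_pair r1 r2 (k : 'I_(r1 + r2)) :
  block_of [:: r1; r2] k = (r1 <= k)%N.
Proof. by rewrite /block_of /= !addn0 ltn_ord ltnNge; case: leqP. Qed.

Lemma block_diag_sizes_block_mx r1 r2 (B : 'M[F]_r1) (C : 'M[F]_r2) :
  block_diag_sizes [:: r1; r2] (block_mx B 0 0 C).
Proof.
move=> i j; rewrite !block_of_pair.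
case: (split_ordP i) => {}i ->; case: (split_ordP j) => {}j ->;
  rewrite ?block_mxEur ?block_mxEdl ?mxE //= ?leq_addr;
  by rewrite ?(leqNgt r1 i) ?(leqNgt r1 j) ?ltn_ord.
Qed.

Lemma congruence_decomposable_col_mx {n m} {A : 'I_m -> 'M[F]_n} {r1 r2}
    (Q1 : 'M[F]_(r1, n)) (Q2 : 'M[F]_(r2, n)) :
  (forall i, (A i)^T = A i) -> (r1 + r2)%N = n -> (0 < r1)%N -> (0 < r2)%N ->
  row_full (col_mx Q1 Q2) -> (forall i, Q1 *m A i *m Q2^T = 0) ->
  congruence_decomposable A.
Proof.
move=> Asym sum_r; subst n => r1_gt0 r2_gt0 Qfull Q12.
exists (col_mx Q1 Q2)^T, [:: r1; r2]; split => //.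
- by rewrite unitmx_tr -row_full_unit.
- by rewrite /= r1_gt0 r2_gt0.
- by rewrite /= addn0.
move=> i; have Q21 : Q2 *m A i *m Q1^T = 0.
  by have := congr1 trmx (Q12 i); rewrite !trmx_mul !trmxK Asym trmx0 mulmxA.
rewrite trmxK tr_col_mx mul_col_mx mul_col_row Q12 Q21.
exact: block_diag_sizes_block_mx.
Qed.

Lemma center_idempotent_decomposable {n m} {A : 'I_m -> 'M[F]_n} {X} :
  (forall i, (A i)^T = A i) -> in_center A X -> X *m X = X ->
  X <> 0 -> X <> 1%:M -> congruence_decomposable A.
Proof.
move=> Asym XC XX X0 X1; pose Y := X^T.
have YY : Y *m Y = Y by rewrite -trmx_mul XX.
apply: (congruence_decomposable_col_mx (row_base Y) (row_base (1%:M - Y))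
  Asym (mxrank_idempotent_compl YY)).
- rewrite lt0n mxrank_eq0; apply: contra_notN X0 => /eqP Y0.
  by rewrite -[X]trmxK -/Y Y0 trmx0.
- rewrite lt0n mxrank_eq0 subr_eq0; apply: contra_notN X1 => /eqP Y1.
  by rewrite -[X]trmxK -/Y -Y1 trmx1.
- exact: row_full_row_base_compl.
move=> i; set Q1 := row_base Y; set Q2 := row_base _.
have Q1Y : Q1 *m Y = Q1 by rewrite submx_idempotent_mulmx ?eq_row_base.
have Q2Y : Q2 *m (1%:M - Y) = Q2.
  by rewrite submx_idempotent_mulmx ?idempotent_compl ?eq_row_base.
have YAY : Y *m A i *m (1%:M - Y)^T = 0.
  rewrite /Y in_center_trmxE // linearB /= trmx1 trmxK mulmxBr mulmx1.
  by rewrite -mulmxA XX subrr.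
clearbody Q1 Q2.
rewrite -Q1Y -Q2Y trmx_mul -!mulmxA (mulmxA Y) (mulmxA (Y *m _)) YAY.
by rewrite !mul0mx mulmx0.
Qed.

End CenterIdempotents.

Theorem mainTheorem2 (F : fieldType) (n m : nat) (A : 'I_m -> 'M[F]_n) :
  (2 \notin [pchar F])%N ->
  (forall i : 'I_m, (A i)^T = A i) ->
  ((~ exists (P : 'M[F]_n) (s : seq nat),
        [/\ P \in unitmx, (2 <= size s)%N, all (fun k => 0 < k)%N s,
            sumn s = n &
            forall i : 'I_m, block_diag_sizes s (P^T *m A i *m P)])
   <->
   (forall X : 'M[F]_n, in_center A X -> X *m X = X ->
      X = 0 \/ X = 1%:M)).
Proof.
move=> _ Asym; split => [indecomposable X XC XX | trivial_idem decomposable].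
- have [->|X0] := eqVneq X 0; first by left.
  have [->|X1] := eqVneq X 1%:M; first by right.
  by case: indecomposable; apply: (center_idempotent_decomposable Asym XC XX);
    apply/eqP.
- have [X [XC XX X0 X1]] := decomposable_center_idempotent Asym decomposable.
  by case: (trivial_idem X XC XX).
Qed.
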